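(* Let $\mathcal{O}_K$ be a Dedekind domain and let $\mathfrak{n}$ be a composite ideal of $\mathcal{O}_K$. Then $\mathfrak{n}$ is a Carmichael ideal of $\mathcal{O}_K$ if and only if all of the following hold: (1) $\mathfrak{n}$ is square-free; (2) $N_K(\mathfrak{n})$ is finite; (3) $N_K(\mathfrak{p})-1$ divides $N_K(\mathfrak{n})-1$ for every prime ideal $\mathfrak{p}$ dividing $\mathfrak{n}$.
   Context: For an ideal $\mathfrak{n}$ of $\mathcal{O}_K$, $N_K(\mathfrak{n})=|\mathcal{O}_K/\mathfrak{n}|$. A composite ideal means a nonzero proper ideal that is not a prime ideal. A finite ring $S$ is a Carmichael ring if $S$ is not a field and $a^{|S|}=a$ for every $a\in S$; an ideal $I$ of a ring $R$ is a Carmichael ideal if $R/I$ is a Carmichael ring. Square-free means that in the prime ideal factorization of $\mathfrak{n}$ every exponent equals $1$. *)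

(* Ideals of a commutative ring R are represented as
   Prop-valued subsets R -> Prop; quotient rings R/I are handled through
   complete residue systems. *)
From HB Require Import structures.
From mathcomp Require Import all_boot all_order all_algebra.
Set Implicit Arguments. Unset Strict Implicit. Unset Printing Implicit Defensive.
Import Order.TTheory GRing.Theory Num.Theory.
Local Open Scope ring_scope.

Section Ideals.
Variable R : comNzRingType.

Definition subset_eq (I J : R -> Prop) := forall x, I x <-> J x.

Definition is_ideal (I : R -> Prop) : Prop :=
  [/\ I 0, (forall x y, I x -> I y -> I (x + y)),
      (forall x, I x -> I (- x)) & (forall r x, I x -> I (r * x))].

Definition ideal_mul (I J : R -> Prop) : R -> Prop := fun z =>
  exists n (a b : 'I_n -> R), (forall i, I (a i)) /\ (forall i, J (b i)) /\
    z = \sum_(i < n) a i * b i.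

Definition ideal_gen (s : seq R) : R -> Prop := fun z =>
  exists c : 'I_(size s) -> R, z = \sum_(i < size s) c i * s`_i.

Definition is_zero_ideal (I : R -> Prop) := forall x, I x -> x = 0.
Definition is_proper_ideal (I : R -> Prop) := is_ideal I /\ ~ I 1.

Definition is_prime_ideal (P : R -> Prop) : Prop :=
  is_proper_ideal P /\ (forall a b, P (a * b) -> P a \/ P b).

Definition is_maximal_ideal (M : R -> Prop) : Prop :=
  is_proper_ideal M /\
  forall J, is_ideal J -> (forall x, M x -> J x) -> subset_eq J M \/ J 1.

Definition ideal_dvd (I N : R -> Prop) : Prop :=
  exists J, is_ideal J /\ subset_eq N (ideal_mul I J).

Definition is_composite_ideal (N : R -> Prop) : Prop :=
  is_proper_ideal N /\ ~ is_zero_ideal N /\ ~ is_prime_ideal N.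

Definition squarefree_ideal (N : R -> Prop) : Prop :=
  forall P, is_prime_ideal P -> ~ is_zero_ideal P -> ~ ideal_dvd (ideal_mul P P) N.

Definition ideal_norm_eq (I : R -> Prop) (k : nat) : Prop :=
  exists s : seq R, size s = k /\
    (forall i j, (i < k)%N -> (j < k)%N -> I (s`_i - s`_j) -> i = j) /\
    (forall x, exists2 i, (i < k)%N & I (x - s`_i)).

Definition ideal_norm_finite (I : R -> Prop) : Prop := exists k, ideal_norm_eq I k.

Definition quotient_is_field (I : R -> Prop) : Prop :=
  ~ I 1 /\ forall x, ~ I x -> exists y, I (x * y - 1).

Definition carmichael_ideal (I : R -> Prop) : Prop :=
  exists k, [/\ ideal_norm_eq I k, ~ quotient_is_field I &
                forall a, I (a ^+ k - a)].

End Ideals.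

Section Dedekind.
Variable R : idomainType.

Definition noetherian_ring : Prop :=
  forall I : R -> Prop, is_ideal I -> exists s : seq R, subset_eq I (ideal_gen s).

Definition integrally_closed : Prop :=
  forall x : {fraction R},
    (exists p : {poly R}, p \is monic /\ root (map_poly (@FracField.tofrac R) p) x) ->
    exists r : R, x = FracField.tofrac r.

Definition nonzero_primes_maximal : Prop :=
  forall P : R -> Prop, is_prime_ideal P -> ~ is_zero_ideal P -> is_maximal_ideal P.

Definition dedekind_domain : Prop :=
  [/\ noetherian_ring, integrally_closed & nonzero_primes_maximal].

End Dedekind.

(* If R/P is a finite field of order q, then a^m = a (mod P) for all a exactly
   when q - 1 divides m - 1: otherwise 'X^r - 1, with r the remainder of m - 1
   modulo q - 1, would have all q - 1 units of R/P as roots.  A Carmichael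
   ideal N with |R/N| = k is square-free: if N = P^2 J, every a in P J has a^2
   in N, hence a = a^k = 0 (mod N), so P J = N = P (P J), which Nakayama's
   lemma forbids; and the congruences a^k = a modulo the primes above N give
   Korselt's divisibilities.  Conversely, a nonzero square-free ideal of a
   Dedekind domain is the intersection of the primes containing it, so the
   congruences modulo each prime lift to N, and R/N is not a field because N
   is not prime.  The Dedekind-domain facts used (a nonzero prime P divides
   every ideal it contains, via P Q = (c)) are derived from the definition
   with the determinant trick and integral closedness. *)

From HB Require Import structures.
From mathcomp Require Import all_boot all_order all_algebra all_field.
From Stdlib Require Import Classical ClassicalEpsilon.
From Stdlib Require List.
Set Implicit Arguments. Unset Strict Implicit. Unset Printing Implicit Defensive.
Import GRing.Theory.
Local Open Scope ring_scope.
Local Open Scope quotient_scope.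

Section IdealArithmetic.
Variable R : comNzRingType.
Implicit Types (I J K M N P : R -> Prop) (a b c : R).

Definition ideal_le I J := forall x, I x -> J x.

Definition ideal_lt I J := ideal_le I J /\ exists2 x, J x & ~ I x.

Lemma ideal_lt_of_not_le I J : ideal_le I J -> ~ ideal_le J I -> ideal_lt I J.
Proof.
move=> IJ not_JI; split=> //; apply: NNPP => no_x; apply: not_JI => x Jx.
by apply: NNPP => Ix; apply: no_x; exists x.
Qed.

Lemma ideal0 I : is_ideal I -> I 0. Proof. by case. Qed.

Lemma idealD I x y : is_ideal I -> I x -> I y -> I (x + y).
Proof. by case=> _ h _ _; apply: h. Qed.

Lemma idealN I x : is_ideal I -> I x -> I (- x).
Proof. by case=> _ _ h _; apply: h. Qed.

Lemma idealB I x y : is_ideal I -> I x -> I y -> I (x - y).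
Proof. by move=> hI hx hy; apply: idealD (idealN _ _) => //. Qed.

Lemma idealMl I r x : is_ideal I -> I x -> I (r * x).
Proof. by case=> _ _ _ h; apply: h. Qed.

Lemma idealMr I r x : is_ideal I -> I x -> I (x * r).
Proof. by rewrite mulrC; apply: idealMl. Qed.

Lemma ideal_sum I n (F : 'I_n -> R) :
  is_ideal I -> (forall i, I (F i)) -> I (\sum_(i < n) F i).
Proof.
by move=> hI hF; apply: (big_ind I) => //; [exact: ideal0 | move=> x y; apply: idealD].
Qed.

Lemma ideal_le_nonzero I J : ~ is_zero_ideal I -> ideal_le I J -> ~ is_zero_ideal J.
Proof. by move=> hI hIJ hJ; apply: hI => x /hIJ /hJ. Qed.

Lemma exists_nonzero I : ~ is_zero_ideal I -> exists2 c, I c & c != 0.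
Proof.
move=> I_nz; apply: NNPP => no_c; apply: I_nz => x Ix.
by apply/eqP; apply: NNPP => x0; apply: no_c; exists x => //; apply/negP.
Qed.

Lemma ideal_one I : is_ideal I -> I 1 -> forall x, I x.
Proof. by move=> hI h1 x; rewrite -[x]mulr1; apply: idealMl. Qed.

Definition mul_preim a K : R -> Prop := fun y => K (a * y).

Lemma is_ideal_mul_preim a K : is_ideal K -> is_ideal (mul_preim a K).
Proof.
rewrite /mul_preim => hK; split=> [|x y hx hy|x hx|r x hx].
- by rewrite mulr0; apply: ideal0.
- by rewrite mulrDr; apply: idealD.
- by rewrite mulrN; apply: idealN.
- by rewrite mulrCA; apply: idealMl.
Qed.

Definition princ a : R -> Prop := fun z => exists r, z = a * r.

Lemma is_ideal_princ a : is_ideal (princ a).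
Proof.
split=> [|x y [r ->] [t ->]|x [r ->]|t x [r ->]].
- by exists 0; rewrite mulr0.
- by exists (r + t); rewrite mulrDr.
- by exists (- r); rewrite mulrN.
- by exists (t * r); rewrite mulrCA.
Qed.

Lemma princ_mem a : princ a a. Proof. by exists 1; rewrite mulr1. Qed.

Lemma ideal_le_princ I a : is_ideal I -> I a -> ideal_le (princ a) I.
Proof. by move=> hI ha x [r ->]; apply: idealMr. Qed.

Lemma ideal_gen_mem (s : seq R) (i : 'I_(size s)) : ideal_gen s s`_i.
Proof.
exists (fun j => (j == i)%:R); rewrite (bigD1 i) //= eqxx mul1r big1 ?addr0 // => j /negbTE ->.
by rewrite mul0r.
Qed.

Lemma ideal_gen_le (s : seq R) I :
  is_ideal I -> (forall i : 'I_(size s), I s`_i) -> ideal_le (ideal_gen s) I.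
Proof. by move=> hI hs x [c ->]; apply: ideal_sum => // i; apply: idealMl. Qed.

Lemma ideal_mul_mem I J a b : I a -> J b -> ideal_mul I J (a * b).
Proof.
by move=> ha hb; exists 1%N, (fun _ => a), (fun _ => b); rewrite big_ord1.
Qed.

Lemma is_ideal_mul I J : is_ideal I -> is_ideal (ideal_mul I J).
Proof.
move=> hI; split.
- exists 0%N, (fun _ => 0), (fun _ => 0).
  by rewrite big_ord0; split; [case | split; [case | by []]].
- move=> x y [n1 [a1 [b1 [ha1 [hb1 ->]]]]] [n2 [a2 [b2 [ha2 [hb2 ->]]]]].
  pose glue (f1 : 'I_n1 -> R) (f2 : 'I_n2 -> R) k :=
    match split k with inl i => f1 i | inr j => f2 j end.
  exists (n1 + n2)%N, (glue a1 a2), (glue b1 b2).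
  split; first by move=> k; rewrite /glue; case: (split k).
  split; first by move=> k; rewrite /glue; case: (split k).
  by rewrite big_split_ord /glue; congr (_ + _); apply: eq_bigr => i _;
    rewrite ?(unsplitK (inl _ i)) ?(unsplitK (inr _ i)).
- move=> x [n [a [b [ha [hb ->]]]]]; exists n, (fun i => - a i), b.
  split; [by move=> i; apply: idealN | split=> //].
  by rewrite -sumrN; apply: eq_bigr => i _; rewrite mulNr.
- move=> r x [n [a [b [ha [hb ->]]]]]; exists n, (fun i => r * a i), b.
  split; [by move=> i; apply: idealMl | split=> //].
  by rewrite mulr_sumr; apply: eq_bigr => i _; rewrite mulrA.
Qed.

Lemma ideal_mul_le I J K :
  is_ideal K -> (forall a b, I a -> J b -> K (a * b)) -> ideal_le (ideal_mul I J) K.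
Proof. by move=> hK h x [n [a [b [ha [hb ->]]]]]; apply: ideal_sum => // i; apply: h. Qed.

Lemma ideal_mul_subl I J : is_ideal I -> ideal_le (ideal_mul I J) I.
Proof. by move=> hI; apply: ideal_mul_le => // a b ha _; apply: idealMr. Qed.

Lemma ideal_mul_subr I J : is_ideal J -> ideal_le (ideal_mul I J) J.
Proof. by move=> hJ; apply: ideal_mul_le => // a b _; apply: idealMl. Qed.

Lemma ideal_mul_le2 I J I' J' : is_ideal I' -> ideal_le I I' -> ideal_le J J' ->
  ideal_le (ideal_mul I J) (ideal_mul I' J').
Proof.
move=> hI' hII hJJ; apply: ideal_mul_le; first exact: is_ideal_mul.
by move=> a b ha hb; apply: ideal_mul_mem; [apply: hII | apply: hJJ].
Qed.

Lemma ideal_mulC I J : is_ideal J -> ideal_le (ideal_mul I J) (ideal_mul J I).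
Proof.
move=> hJ; apply: ideal_mul_le; first exact: is_ideal_mul.
by move=> a b ha hb; rewrite mulrC; apply: ideal_mul_mem.
Qed.

Lemma ideal_mulA I J K : is_ideal I ->
  subset_eq (ideal_mul I (ideal_mul J K)) (ideal_mul (ideal_mul I J) K).
Proof.
move=> hI x; set IJ_K := ideal_mul (ideal_mul I J) K; set I_JK := ideal_mul I _.
have hIJ_K : is_ideal IJ_K by apply/is_ideal_mul/is_ideal_mul.
have hI_JK : is_ideal I_JK by apply: is_ideal_mul.
split; move: x.
  apply: ideal_mul_le => // a y ha.
  apply: (@ideal_mul_le J K (mul_preim a IJ_K)); first exact: is_ideal_mul_preim.
  by move=> j k hj hk; rewrite /mul_preim mulrA; apply/ideal_mul_mem/hk/ideal_mul_mem.
apply: ideal_mul_le => // z k hz hk; rewrite mulrC; move: z hz.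
apply: (@ideal_mul_le I J (mul_preim k I_JK)); first exact: is_ideal_mul_preim.
move=> a j ha hj; rewrite /mul_preim mulrCA [k * j]mulrC.
exact/ideal_mul_mem/ideal_mul_mem.
Qed.

Lemma ideal_mulCA I J K : is_ideal I -> is_ideal J ->
  ideal_le (ideal_mul I (ideal_mul J K)) (ideal_mul J (ideal_mul I K)).
Proof.
move=> hI hJ x /(ideal_mulA _ _ hI) hx; apply/(ideal_mulA _ _ hJ).
exact: ideal_mul_le2 (is_ideal_mul I hJ) (ideal_mulC hJ) (fun _ h => h) _ hx.
Qed.

Definition ideal_prod (ps : seq (R -> Prop)) : R -> Prop :=
  foldr (@ideal_mul R) (fun _ => True) ps.

Lemma ideal_prod_cat ps1 ps2 : List.Forall (@is_ideal R) ps1 ->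
  ideal_le (ideal_prod (ps1 ++ ps2)) (ideal_mul (ideal_prod ps1) (ideal_prod ps2)).
Proof.
elim=> [|p ps hp _ IH] /= x hx; first by rewrite -[x]mul1r; apply: ideal_mul_mem.
by apply/(ideal_mulA _ _ hp); apply: ideal_mul_le2 hp (fun _ h => h) IH _ hx.
Qed.

Lemma ideal_prod_rem q ps1 ps2 : is_ideal q -> List.Forall (@is_ideal R) ps1 ->
  ideal_le (ideal_mul q (ideal_prod (ps1 ++ ps2))) (ideal_prod (ps1 ++ q :: ps2)).
Proof.
move=> hq; elim=> [|p ps hp _ IH] //= x /(ideal_mulCA hq hp).
exact: ideal_mul_le2 hp (fun _ h => h) IH x.
Qed.

Lemma prime_ideal_prod P ps : is_prime_ideal P -> ideal_le (ideal_prod ps) P ->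
  exists ps1 q ps2, ps = ps1 ++ q :: ps2 /\ ideal_le q P.
Proof.
move=> [[hPi hP1] hPp]; elim: ps => [|p ps IH] /= hps; first by case: hP1; apply: hps.
have [hp|[a [ha haP]]] : ideal_le p P \/ exists a, p a /\ ~ P a.
  apply: NNPP => /not_or_and[hp hn]; apply: hp => x hx.
  by apply: NNPP => hxP; apply: hn; exists x.
  by exists [::], p, ps.
have [|ps1 [q [ps2 [-> hq]]]] := IH; last by exists (p :: ps1), q, ps2.
by move=> y hy; have [] := hPp _ _ (hps _ (ideal_mul_mem ha hy)).
Qed.

Definition nonzero_prime P := is_prime_ideal P /\ ~ is_zero_ideal P.

Lemma nonzero_primes_ideal ps :
  List.Forall nonzero_prime ps -> List.Forall (@is_ideal R) ps.
Proof. by apply: List.Forall_impl => p [[[]]]. Qed.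

Definition ideal_adj I a : R -> Prop := fun z => exists x r, I x /\ z = x + a * r.

Lemma is_ideal_adj I a : is_ideal I -> is_ideal (ideal_adj I a).
Proof.
move=> hI; split=> [|_ _ [x1 [r1 [h1 ->]]] [x2 [r2 [h2 ->]]]|_ [x1 [r1 [h1 ->]]]|t _ [x1 [r1 [h1 ->]]]].
- by exists 0, 0; rewrite mulr0 addr0; split=> //; apply: ideal0.
- by exists (x1 + x2), (r1 + r2); split; [apply: idealD | rewrite mulrDr addrACA].
- by exists (- x1), (- r1); split; [apply: idealN | rewrite mulrN opprD].
- by exists (t * x1), (t * r1); split; [apply: idealMl | rewrite mulrDr mulrCA].
Qed.

Lemma ideal_le_adj I a : ideal_le I (ideal_adj I a).
Proof. by move=> x hx; exists x, 0; rewrite mulr0 addr0. Qed.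

Lemma ideal_adj_mem I a : is_ideal I -> ideal_adj I a a.
Proof. by move=> hI; exists 0, 1; rewrite mulr1 add0r; split=> //; apply: ideal0. Qed.

Lemma maximal_ideal_adj_one P j : is_maximal_ideal P -> ~ P j ->
  exists p r, P p /\ 1 = p + j * r.
Proof.
move=> [[hPi _] hmax] hj.
have [PjP|//] := hmax _ (is_ideal_adj j hPi) (@ideal_le_adj P j).
by case: hj; apply/PjP/ideal_adj_mem.
Qed.

Lemma maximal_ideal_prime P : is_maximal_ideal P -> is_prime_ideal P.
Proof.
move=> hPm; have [[hPi hP1] _] := hPm; split=> // a b hab.
have [ha|ha] := classic (P a); [by left | right].
have [p [r [hp e]]] := maximal_ideal_adj_one hPm ha.
rewrite -[b]mulr1 e mulrDr; apply: idealD => //; first exact: idealMl.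
by rewrite mulrA [b * a]mulrC; apply: idealMr.
Qed.

Lemma maximal_quotient_is_field P : is_maximal_ideal P -> quotient_is_field P.
Proof.
move=> hPm; have [[hPi hP1] _] := hPm; split=> // x hx.
have [p [r [hp ->]]] := maximal_ideal_adj_one hPm hx.
by exists r; rewrite opprD addrCA subrr addr0; apply: idealN.
Qed.

Lemma ideal_norm_gt1 N k : is_proper_ideal N -> ideal_norm_eq N k -> (1 < k)%N.
Proof.
move=> [hN hN1] [s [_ [_ hs]]]; rewrite ltnNge; apply/negP => k_le1.
have [i0 + h0] := hs 0; have [i1 + h1] := hs 1.
move=> /leq_trans/(_ k_le1); rewrite ltnS leqn0 => /eqP e1.
move=> /leq_trans/(_ k_le1); rewrite ltnS leqn0 => /eqP e0.
by case: hN1; have := idealB hN h1 h0; rewrite e0 e1 sub0r opprK subrK.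
Qed.

Lemma ideal_norm_le N k1 k2 : is_ideal N ->
  ideal_norm_eq N k1 -> ideal_norm_eq N k2 -> (k1 <= k2)%N.
Proof.
move=> hN [s [_ [s_uniq _]]] [t [_ [_ t_cover]]].
have [f hf] : exists f : 'I_k1 -> 'I_k2, forall i : 'I_k1, N (s`_i - t`_(f i)).
  apply: (@fin_all_exists _ (fun _ => 'I_k2)
            (fun (i : 'I_k1) (j : 'I_k2) => N (s`_i - t`_j))) => i.
  by have [j hj h] := t_cover s`_i; exists (Ordinal hj).
suff /leq_card : injective f by rewrite !card_ord.
move=> i i' e; apply/val_inj/s_uniq; rewrite ?ltn_ord //.
by have := idealB hN (hf i) (hf i'); rewrite e opprB addrA subrK.
Qed.

Lemma ideal_norm_uniq N k1 k2 : is_ideal N ->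
  ideal_norm_eq N k1 -> ideal_norm_eq N k2 -> k1 = k2.
Proof. by move=> hN h1 h2; apply/eqP; rewrite eqn_leq !(ideal_norm_le hN). Qed.

Lemma exists_incongruent_reps P (t : seq R) : is_ideal P -> exists u : seq R,
  (forall i j, (i < size u)%N -> (j < size u)%N -> P (u`_i - u`_j) -> i = j) /\
  (forall i, (i < size t)%N -> exists2 j, (j < size u)%N & P (t`_i - u`_j)).
Proof.
move=> hP; elim: t => [|x t [u [u_uniq u_cover]]]; first by exists [::].
have [[j hj hx]|hx] := classic (exists2 j, (j < size u)%N & P (x - u`_j)).
  by exists u; split=> // -[|i] /=; [exists j | apply: u_cover].
exists (x :: u); split=> [[|i] [|j] //= hi hj hd|[|i] /= hi].
- by case: hx; exists j.
- by case: hx; exists i => //; rewrite -opprB; apply: idealN.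
- by congr S; apply: u_uniq.
- by exists 0%N; rewrite ?subrr //; apply: ideal0.
- by have [j hj h] := u_cover i hi; exists j.+1.
Qed.

Lemma ideal_norm_finite_le N P : is_ideal P -> ideal_le N P ->
  ideal_norm_finite N -> ideal_norm_finite P.
Proof.
move=> hP hNP [k [s [s_size [_ s_cover]]]].
have [u [u_uniq u_cover]] := exists_incongruent_reps s hP.
exists (size u), u; split=> //; split=> // y.
have [i hi hy] := s_cover y; have [|j hj hd] := u_cover i; first by rewrite s_size.
by exists j => //; have := idealD hP (hNP _ hy) hd; rewrite addrA subrK.
Qed.

Lemma ideal_dvd_le P N : is_ideal P -> ideal_dvd P N -> ideal_le N P.
Proof. by move=> hP [J [_ e]] x /e; apply: ideal_mul_subl. Qed.

Lemma ideal_adj_mul_le I a b : is_ideal I -> I (a * b) ->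
  ideal_le (ideal_mul (ideal_adj I a) (ideal_adj I b)) I.
Proof.
move=> hI hab; apply: ideal_mul_le => // _ _ [x [r [hx ->]]] [y [t [hy ->]]].
rewrite mulrDl; apply: (idealD hI); first exact: idealMr hI hx.
rewrite mulrDr; apply: (idealD hI); first by rewrite mulrC; apply: idealMr hI hy.
by rewrite mulrACA; apply: idealMr hI hab.
Qed.

Lemma ideal_mul_princ c M z : is_ideal M -> ideal_mul (princ c) M z ->
  exists2 y, M y & z = c * y.
Proof.
move=> hM [n [a [m [/fin_all_exists [r ar] [Mm ->]]]]].
exists (\sum_i r i * m i); first by apply: ideal_sum => // i; apply: idealMl.
by rewrite mulr_sumr; apply: eq_bigr => i _; rewrite ar mulrA.
Qed.

Lemma ideal_mul_gen P (s : seq R) z : is_ideal P -> ideal_mul P (ideal_gen s) z ->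
  exists2 cf : 'I_(size s) -> R, forall k, P (cf k) & z = \sum_k cf k * s`_k.
Proof.
move=> hP [n [a [b [Pa [/fin_all_exists [d bd] ->]]]]].
exists (fun k => \sum_i a i * d i k) => [k|].
  by apply: ideal_sum => // i; apply: idealMr.
under eq_bigr => i _ do rewrite bd mulr_sumr.
rewrite exchange_big; apply: eq_bigr => k _; rewrite mulr_suml.
by apply: eq_bigr => i _; rewrite mulrA.
Qed.

Definition ideal_colon I J : R -> Prop := fun x => forall p, J p -> I (x * p).

Lemma is_ideal_colon I J : is_ideal I -> is_ideal (ideal_colon I J).
Proof.
move=> hI; split=> [p _|x y hx hy p hp|x hx p hp|r x hx p hp].
- by rewrite mul0r; apply: ideal0.
- by rewrite mulrDl; apply: idealD hI (hx _ hp) (hy _ hp).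
- by rewrite mulNr; apply: idealN hI (hx _ hp).
- by rewrite -mulrA; apply: idealMl hI (hx _ hp).
Qed.

Lemma ideal_mul_colon_le I J : is_ideal I -> ideal_le (ideal_mul J (ideal_colon I J)) I.
Proof. by move=> hI; apply: ideal_mul_le => // p x hp hx; rewrite mulrC; apply: hx. Qed.

Lemma quotient_is_field_prime N : is_ideal N -> quotient_is_field N -> is_prime_ideal N.
Proof.
move=> hN [hN1 N_inv]; split=> // a b hab; have [ha|ha] := classic (N a); [by left | right].
have [y hy] := N_inv a ha.
have := idealB hN (idealMr y hN hab) (idealMl b hN hy).
by rewrite mulrBr mulr1 [b * (a * y)]mulrCA mulrA opprB addrC subrK.
Qed.

End IdealArithmetic.

Lemma expf_card_pred (F : finFieldType) (x : F) : x != 0 -> x ^+ #|F|.-1 = 1.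
Proof.
move=> x0; apply: (mulIf x0); rewrite mul1r -exprSr prednK ?expf_card //.
exact: ltn_trans (finNzRing_gt1 F).
Qed.

Lemma finField_pow_id (F : finFieldType) m : (0 < m)%N ->
  (forall x : F, x ^+ m = x) <-> (#|F|.-1 %| m.-1)%N.
Proof.
move=> m_gt0; have q_gt0 : (0 < #|F|.-1)%N by rewrite -subn1 subn_gt0 finNzRing_gt1.
split; last first.
  move=> /dvdnP[k m1_eq] x.
  have [->|x0] := eqVneq x 0; first by rewrite expr0n gtn_eqF.
  by rewrite -(prednK m_gt0) exprS m1_eq mulnC exprM expf_card_pred // expr1n mulr1.
move=> xm_x; set r := (m.-1 %% #|F|.-1)%N.
have xr1 (x : F) : x != 0 -> x ^+ r = 1.
  move=> x0; have : x ^+ m.-1 = 1 by apply: (mulIf x0); rewrite -exprSr prednK ?xm_x ?mul1r.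
  by rewrite {1}(divn_eq m.-1 #|F|.-1) exprD mulnC exprM expf_card_pred // expr1n mul1r.
rewrite /dvdn -/r -leqn0 leqNgt; apply/negP => r_gt0.
have roots : all r.-unity_root (enum (predC1 (0 : F))).
  by apply/allP => x; rewrite mem_enum => x0; rewrite unity_rootE xr1.
have := max_unity_roots r_gt0 roots (enum_uniq _).
by rewrite -cardE cardC1 leqNgt ltn_mod q_gt0.
Qed.

Definition asbool (A : Prop) : bool :=
  if excluded_middle_informative A then true else false.

Lemma asboolP (A : Prop) : reflect A (asbool A).
Proof. by rewrite /asbool; case: excluded_middle_informative => h; constructor. Qed.

Section ResidueRing.
Variables (R : comNzRingType) (P : R -> Prop).
Hypotheses (P_ideal : is_ideal P) (P_proper : ~ P 1).

Definition ideal_pred : pred R := fun x => asbool (P x).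

Lemma ideal_pred_closed : idealr_closed ideal_pred.
Proof.
split; [exact/asboolP/(ideal0 P_ideal) | exact/asboolP |].
by move=> a u v /asboolP hu /asboolP hv; apply/asboolP; apply: idealD (idealMl _ _ hu) hv.
Qed.

HB.instance Definition _ := isIdealr.Build R ideal_pred ideal_pred_closed.

Local Notation residue_ring := {ideal_quot (ideal_pred : idealr R)}.
Local Notation pi := \pi_residue_ring.

Lemma pi_eq x y : pi x = pi y <-> P (x - y).
Proof.
have := Quotient.idealrBE (ideal_pred : idealr R) x y.
rewrite -[_ == _]/(pi x == pi y) => e.
by split=> [/eqP|h]; [rewrite -e => /asboolP | apply/eqP; rewrite -e; apply/asboolP].
Qed.

Lemma pi_eq0 x : pi x = 0 <-> P x.
Proof. by rewrite -(rmorph0 pi) pi_eq subr0. Qed.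

Lemma det1B_ideal n (A : 'M[R]_n) : (forall i j, P (A i j)) -> P (\det (1%:M - A) - 1).
Proof.
move=> PA; apply/pi_eq; rewrite -det_map_mx.
have -> : map_mx pi (1%:M - A) = 1%:M.
  apply/matrixP => i j; rewrite !mxE rmorphB rmorph_nat -[RHS]subr0.
  by congr (_ - _); apply/pi_eq0.
by rewrite det1 rmorph1.
Qed.

Section ResidueField.
Hypothesis P_field : forall x, ~ P x -> exists y, P (x * y - 1).

Definition residue_inv (x : residue_ring) : residue_ring :=
  if excluded_middle_informative (exists y, y * x == 1) is left h then xchoose h else 0.

Lemma residue_mulVf (x : residue_ring) : x != 0 -> residue_inv x * x = 1.
Proof.
move=> x0; rewrite /residue_inv; case: excluded_middle_informative => [h|[]].
  exact/eqP/(xchooseP h).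
have [|y hy] := @P_field (repr x).
  by move/pi_eq0; rewrite reprK; apply/eqP.
exists (pi y); apply/eqP; rewrite -[x in _ * x]reprK -rmorphM -(rmorph1 pi).
by apply/pi_eq; rewrite mulrC.
Qed.

Lemma residue_inv0 : residue_inv 0 = 0.
Proof.
rewrite /residue_inv; case: excluded_middle_informative => // h.
by exfalso; case: h => y; rewrite mulr0 eq_sym oner_eq0.
Qed.

(* The otherwise unused argument puts the field hypothesis into the type, so
   that the field structure (and the finite one below) is inferred from it. *)
Definition residue_field of (forall x, ~ P x -> exists y, P (x * y - 1)) : Type :=
  residue_ring.
HB.instance Definition _ := GRing.ComNzRing.on (residue_field P_field).
HB.instance Definition _ :=
  GRing.ComNzRing_isField.Build (residue_field P_field) residue_mulVf residue_inv0.

Section FiniteResidueField.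
Variable s : seq R.
Hypothesis s_uniq : forall i j, (i < size s)%N -> (j < size s)%N -> P (s`_i - s`_j) -> i = j.
Hypothesis s_cover : forall x, exists2 i, (i < size s)%N & P (x - s`_i).

Definition fin_residue_field of
  (forall x, exists2 i, (i < size s)%N & P (x - s`_i)) : Type := residue_field P_field.
HB.instance Definition _ := GRing.Field.on (fin_residue_field s_cover).

Definition residue_of_index (i : 'I_(size s)) : fin_residue_field s_cover := pi s`_i.

Definition index_of_residue (x : fin_residue_field s_cover) : option 'I_(size s) :=
  [pick i | residue_of_index i == x].

Lemma index_of_residueK : pcancel index_of_residue (omap residue_of_index).
Proof.
move=> x; rewrite /index_of_residue; case: pickP => [i /eqP hi|no_i] /=; first by rewrite hi.
have [i hi hx] := s_cover (repr x); move/eqP: (no_i (Ordinal hi)); case.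
by rewrite /residue_of_index -[x in _ = x]reprK; apply/esym/pi_eq.
Qed.

HB.instance Definition _ := PCanIsCountable index_of_residueK.
HB.instance Definition _ := isFinite.Build (fin_residue_field s_cover)
  (pcan_enumP index_of_residueK).

Lemma card_fin_residue_field : #|(fin_residue_field s_cover : finType)| = size s.
Proof.
have inj : injective residue_of_index.
  by move=> i j /pi_eq h; apply/val_inj/s_uniq => //; rewrite ltn_ord.
rewrite -[RHS]card_ord -(card_codom inj); apply: eq_card => x.
apply/esym/codomP; move: (index_of_residueK x).
by case: (index_of_residue x) => [i /= [<-]|//]; exists i.
Qed.

Lemma residue_pow_id_iff m : (0 < m)%N ->
  (forall a, P (a ^+ m - a)) <-> ((size s).-1 %| m.-1)%N.
Proof.
move=> m_gt0; rewrite -card_fin_residue_field -finField_pow_id //.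
split=> [Pm x | xm a]; last by apply/pi_eq; rewrite rmorphXn; apply: xm.
by rewrite -[x]reprK -rmorphXn; apply/pi_eq.
Qed.

End FiniteResidueField.
End ResidueField.
End ResidueRing.

Lemma pow_id_mod_ideal_iff (R : comNzRingType) (P : R -> Prop) q m :
  is_ideal P -> quotient_is_field P -> ideal_norm_eq P q -> (0 < m)%N ->
  (forall a, P (a ^+ m - a)) <-> (q.-1 %| m.-1)%N.
Proof.
move=> P_ideal [P_proper P_field] [s [<- [s_uniq s_cover]]] m_gt0.
exact: residue_pow_id_iff.
Qed.

Section DeterminantTrick.
Variable R : idomainType.

Definition gen_row (s : seq R) : 'rV[R]_(size s) := \row_k s`_k.

Lemma gen_row_neq0 (s : seq R) : ~ is_zero_ideal (ideal_gen s) -> gen_row s != 0.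
Proof.
move=> s_nz; apply/eqP => s0; apply: s_nz => x [c ->]; apply: big1 => k _.
by move/rowP: s0 => /(_ k); rewrite !mxE => ->; rewrite mulr0.
Qed.

Lemma gen_row_relation (s : seq R) (Q : R -> Prop) (a c : R) :
  (forall j : 'I_(size s), exists2 cf : 'I_(size s) -> R,
     forall k, Q (cf k) & a * s`_j = c * \sum_k cf k * s`_k) ->
  exists2 A : 'M_(size s), forall i j, Q (A i j) & a *: gen_row s = c *: (gen_row s *m A).
Proof.
move=> /fin_all_exists2 [cf Qcf rel]; exists (\matrix_(k, j) cf j k) => [i j|].
  by rewrite mxE.
apply/rowP => j; rewrite !mxE rel; congr (_ * _).
by apply: eq_bigr => k _; rewrite !mxE mulrC.
Qed.

Lemma det1B_eq0 n (g : 'rV[R]_n) (A : 'M_n) : g != 0 -> g = g *m A -> \det (1%:M - A) = 0.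
Proof.
move=> g0 gA; apply/eqP/det0P; exists g => //.
by rewrite mulmxBr mulmx1 -gA subrr.
Qed.

Lemma integrally_closed_eigen (R_ic : integrally_closed R) n (g : 'rV[R]_n)
    (A : 'M_n) (b c : R) :
  c != 0 -> g != 0 -> b *: g = c *: (g *m A) -> exists r, b = c * r.
Proof.
move=> c0 g0 gA; pose f := @tofrac R; pose y := f b / f c.
have fc0 : f c != 0 by rewrite tofrac_eq0.
have : eigenvalue (map_mx f A) y.
  apply/eigenvalueP; exists (map_mx f g).
    by apply: (scalerI fc0); rewrite scalerA mulrC divfK // -map_mxM -!map_mxZ gA.
  apply: contra g0 => /eqP fg0; apply/eqP/rowP => k.
  by move/rowP: fg0 => /(_ k); rewrite !mxE => /eqP; rewrite tofrac_eq0 => /eqP.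
rewrite eigenvalue_root_char -map_char_poly => y_root.
have [r yr] := R_ic y (ex_intro _ _ (conj (char_poly_monic A) y_root)).
by exists r; apply/eqP; rewrite -tofrac_eq tofracM -yr /y mulrC divfK.
Qed.

End DeterminantTrick.

Section Noetherian.
Variable R : idomainType.
Hypothesis R_noeth : noetherian_ring R.
Implicit Types (I J M P : R -> Prop).

Lemma noetherian_chain (c : nat -> R -> Prop) :
  (forall n, is_ideal (c n)) -> (forall n, ideal_le (c n) (c n.+1)) ->
  exists n, ideal_le (c n.+1) (c n).
Proof.
move=> c_ideal c_le.
have c_mono n m : (n <= m)%N -> ideal_le (c n) (c m).
  by move=> /subnK <-; elim: (m - n)%N => // k IH x /IH /c_le.
pose U x := exists n, c n x.
have U_ideal : is_ideal U.
  split=> [|x y [n hx] [m hy]|x [n hx]|r x [n hx]].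
  - by exists 0%N; apply: ideal0.
  - exists (maxn n m); apply: (idealD (c_ideal _)).
      exact: c_mono (leq_maxl n m) _ hx.
    exact: c_mono (leq_maxr n m) _ hy.
  - by exists n; apply: idealN.
  - by exists n; apply: idealMl.
have [s Us] := R_noeth U_ideal.
have /fin_all_exists [m hm] : forall i : 'I_(size s), exists n, c n s`_i.
  by move=> i; apply/Us/ideal_gen_mem.
exists (\max_i m i) => x cx; have /Us : U x by exists (\max_i m i).+1.
apply: (ideal_gen_le (c_ideal _)) => i.
by apply: c_mono (hm i); apply: leq_bigmax.
Qed.

Lemma noetherian_ind (F : (R -> Prop) -> Prop) :
  (forall I, is_ideal I -> (forall J, is_ideal J -> ideal_lt I J -> F J) -> F I) ->
  forall I, is_ideal I -> F I.
Proof.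
move=> IH I0 I0_ideal; apply: NNPP => not_F0.
pose B := {I | is_ideal I /\ ~ F I}.
have step (b : B) : {b' : B | ideal_lt (sval b) (sval b')}.
  apply: constructive_indefinite_description; case: b => I [I_ideal not_FI] /=.
  apply: NNPP => no_b'; apply: not_FI; apply: IH => // J J_ideal IJ.
  by apply: NNPP => not_FJ; apply: no_b'; exists (exist _ J (conj J_ideal not_FJ)).
pose b n := iter n (fun b => sval (step b)) (exist _ I0 (conj I0_ideal not_F0)).
have b_lt n : ideal_lt (sval (b n)) (sval (b n.+1)) by rewrite /b iterS; exact: svalP (step _).
have [n stable] := noetherian_chain (fun n => (svalP (b n)).1) (fun n => (b_lt n).1).
by have [x /stable] := (b_lt n).2.
Qed.

Lemma exists_maximal_ideal M :
  is_proper_ideal M -> exists2 P, is_maximal_ideal P & ideal_le M P.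
Proof.
case; move: M; apply: noetherian_ind => M M_ideal IH M_proper.
have [M_max|not_max] := classic (is_maximal_ideal M); first by exists M.
have [J [J_ideal MJ not_JM J_proper]] :
    exists J, [/\ is_ideal J, ideal_le M J, ~ ideal_le J M & ~ J 1].
  apply: NNPP => no_J; apply: not_max; split=> // J J_ideal MJ.
  have [J1|J_proper] := classic (J 1); [by right | left].
  have [JM|not_JM] := classic (ideal_le J M); first by move=> x; split=> [/JM|/MJ].
  by case: no_J; exists J.
have [P P_max JP] := IH J J_ideal (ideal_lt_of_not_le MJ not_JM) J_proper.
by exists P => // x /MJ /JP.
Qed.

Lemma contains_prime_prod I : is_ideal I -> ~ is_zero_ideal I ->
  exists2 ps, List.Forall (@nonzero_prime R) ps & ideal_le (ideal_prod ps) I.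
Proof.
move: I; apply: noetherian_ind => I I_ideal IH I_nz.
have [I1|I_proper] := classic (I 1).
  by exists [::] => // x _; apply: ideal_one.
have [I_prime|not_prime] := classic (is_prime_ideal I).
  by exists [:: I]; [constructor | apply: ideal_mul_subl].
have [a [b [Iab [Ia Ib]]]] : exists a b, I (a * b) /\ ~ I a /\ ~ I b.
  apply: NNPP => no_ab; apply: not_prime; split=> // a b Iab.
  by apply: NNPP => /not_or_and[Ia Ib]; apply: no_ab; exists a, b.
have adj_prod c : ~ I c ->
    exists2 ps, List.Forall (@nonzero_prime R) ps & ideal_le (ideal_prod ps) (ideal_adj I c).
  move=> Ic; apply: IH; first exact: is_ideal_adj.
    by split; [apply: ideal_le_adj | exists c; [apply: ideal_adj_mem |]].
  exact: ideal_le_nonzero I_nz (@ideal_le_adj _ I c).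
have [ps1 ps1_prime ps1_le] := adj_prod a Ia.
have [ps2 ps2_prime ps2_le] := adj_prod b Ib.
exists (ps1 ++ ps2); first exact/List.Forall_app.
move=> x /(ideal_prod_cat (nonzero_primes_ideal ps1_prime)).
move=> /(ideal_mul_le2 (is_ideal_adj a I_ideal) ps1_le ps2_le).
exact: ideal_adj_mul_le.
Qed.

Lemma nakayama P M : is_proper_ideal P -> is_ideal M -> ~ is_zero_ideal M ->
  ~ ideal_le M (ideal_mul P M).
Proof.
move=> [P_ideal P_proper] M_ideal M_nz M_le.
have [s Ms] := R_noeth M_ideal.
have s_nz := ideal_le_nonzero M_nz (fun x => proj1 (Ms x)).
have [A PA sA] : exists2 A : 'M_(size s), forall i j, P (A i j) &
    1 *: gen_row s = 1 *: (gen_row s *m A).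
  apply: gen_row_relation => j; rewrite mul1r.
  have /M_le : M s`_j by apply/Ms/ideal_gen_mem.
  move/(ideal_mul_le2 P_ideal (fun _ h => h) (fun x => proj1 (Ms x))).
  by case/ideal_mul_gen=> // cf Pcf ->; exists cf; rewrite ?mul1r.
have := det1B_ideal P_ideal P_proper PA.
rewrite (det1B_eq0 (gen_row_neq0 s_nz)) ?sub0r; last by move: sA; rewrite !scale1r.
by move/(idealN P_ideal); rewrite opprK.
Qed.

End Noetherian.

Section Dedekind.
Variable R : idomainType.
Hypotheses (R_noeth : noetherian_ring R) (R_ic : integrally_closed R)
  (R_dim1 : nonzero_primes_maximal R).
Implicit Types (I J M P Q : R -> Prop).

Lemma nonzero_prime_maximal P : nonzero_prime P -> is_maximal_ideal P.
Proof. by case=> P_prime P_nz; apply: R_dim1. Qed.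

Lemma dvdr_of_ideal_stable P b c : is_ideal P -> ~ is_zero_ideal P -> c != 0 ->
  (forall p, P p -> exists2 r, P r & b * p = c * r) -> princ c b.
Proof.
move=> P_ideal P_nz c0 stable.
have [s Ps] := R_noeth P_ideal.
have s_nz := ideal_le_nonzero P_nz (fun x => proj1 (Ps x)).
have [A _ sA] : exists2 A : 'M_(size s), forall i j : 'I_(size s), True &
    b *: gen_row s = c *: (gen_row s *m A).
  apply: (gen_row_relation (Q := fun _ => True)) => j.
  have [r /Ps [cf ->] ->] := stable _ (proj2 (Ps _) (ideal_gen_mem j)).
  by exists cf.
by have [r ->] := integrally_closed_eigen R_ic c0 (gen_row_neq0 s_nz) sA; exists r.
Qed.

(* A minimal product of nonzero primes inside (c) has P as a factor, and the
   product of the remaining factors is not contained in (c). *)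
Lemma colon_princ_nontrivial P c : nonzero_prime P -> P c -> c != 0 ->
  exists2 b, ideal_colon (princ c) P b & ~ princ c b.
Proof.
move=> [P_prime P_nz] Pc c0; have [[P_ideal P_proper] _] := P_prime.
have c_nz : ~ is_zero_ideal (princ c) by move=> h; case/eqP: c0; apply/h/princ_mem.
pose good n := exists ps, [/\ size ps = n, List.Forall (@nonzero_prime R) ps &
  ideal_le (ideal_prod ps) (princ c)].
have good_ex : exists n, asbool (good n).
  have [ps ps_prime ps_le] := contains_prime_prod R_noeth (is_ideal_princ c) c_nz.
  by exists (size ps); apply/asboolP; exists ps.
case: (ex_minnP good_ex) => _ /asboolP [ps [<- ps_prime ps_le]] ps_min.
have [ps1 [q [ps2 [ps_eq qP]]]] :=
  prime_ideal_prod P_prime (fun x hx => ideal_le_princ P_ideal Pc (ps_le x hx)).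
move: ps_prime; rewrite ps_eq.
move=> /List.Forall_app [ps1_prime /List.Forall_cons_iff [q_nzp ps2_prime]].
have Pq : ideal_le P q.
  have [_ /(_ P P_ideal qP) [e|//]] := nonzero_prime_maximal q_nzp.
  by move=> x /e.
have [b b_in b_notin] : exists2 b, ideal_prod (ps1 ++ ps2) b & ~ princ c b.
  apply: NNPP => no_b; suff /ps_min : asbool (good (size (ps1 ++ ps2))).
    by rewrite ps_eq !size_cat /= addnS ltnn.
  apply/asboolP.
  exists (ps1 ++ ps2); split=> //; first exact/List.Forall_app.
  by move=> x bx; apply: NNPP => cx; apply: no_b; exists x.
exists b => // p Pp; apply/ps_le; rewrite ps_eq.
apply: ideal_prod_rem q_nzp.1.1.1 (nonzero_primes_ideal ps1_prime) _ _; rewrite mulrC.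
exact: ideal_mul_mem (Pq _ Pp) b_in.
Qed.

(* With Q := ((c) : P), either c lies in P Q, or maximality of P forces
   P Q = c P; then every b in Q has b P inside c P, so c divides b by
   integrality, contradicting [colon_princ_nontrivial]. *)
Lemma prime_ideal_invertible P : nonzero_prime P ->
  exists Q c, [/\ is_ideal Q, c != 0 & subset_eq (ideal_mul P Q) (princ c)].
Proof.
move=> P_nzp; have [[[P_ideal _] _] P_nz] := P_nzp.
have [c Pc c0] := exists_nonzero P_nz.
pose Q := ideal_colon (princ c) P.
have Q_ideal : is_ideal Q := is_ideal_colon P (is_ideal_princ c).
have PQ_le : ideal_le (ideal_mul P Q) (princ c).
  exact: ideal_mul_colon_le (is_ideal_princ c).
have Qc : Q c by move=> p _; exists p.
pose I := mul_preim c (ideal_mul P Q).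
have P_le_I : ideal_le P I by move=> p Pp; rewrite /I /mul_preim mulrC; apply: ideal_mul_mem.
have I_ideal : is_ideal I := is_ideal_mul_preim c (is_ideal_mul Q P_ideal).
have [I_eq|I1] := (nonzero_prime_maximal P_nzp).2 I I_ideal P_le_I.
  have [b Qb not_cb] := colon_princ_nontrivial P_nzp Pc c0.
  case: not_cb; apply: dvdr_of_ideal_stable P_ideal P_nz c0 _ => p Pp.
  have [r pb] := PQ_le _ (ideal_mul_mem Pp Qb).
  by exists r; [apply/I_eq; rewrite /I /mul_preim -pb; apply: ideal_mul_mem | rewrite mulrC].
exists Q, c; split=> // x; split=> [/PQ_le //|[r ->]].
by have := idealMr r (is_ideal_mul Q P_ideal) I1; rewrite /I /mul_preim mulr1.
Qed.

Lemma prime_ideal_dvd P M : nonzero_prime P -> is_ideal M -> ideal_le M P -> ideal_dvd P M.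
Proof.
move=> P_nzp M_ideal MP; have [[[P_ideal _] _] _] := P_nzp.
have [Q [c [Q_ideal c0 PQ_eq]]] := prime_ideal_invertible P_nzp.
pose J := mul_preim c (ideal_mul Q M).
have QM_le : ideal_le (ideal_mul Q M) (princ c).
  move=> x /(ideal_mul_le2 Q_ideal (fun _ h => h) MP) /(ideal_mulC P_ideal).
  exact: (proj1 (PQ_eq _)).
exists J; split=> [|m]; first exact/is_ideal_mul_preim/is_ideal_mul.
split=> [Mm|].
  have [n [a [b [Pa [Qb c_eq]]]]] := proj2 (PQ_eq c) (princ_mem c).
  have /fin_all_exists [t bt] : forall i, exists t, b i * m = c * t.
    by move=> i; apply/QM_le/ideal_mul_mem.
  have -> : m = \sum_i a i * t i.
    apply: (mulfI c0); rewrite mulr_sumr {1}c_eq mulr_suml.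
    by apply: eq_bigr => i _; rewrite -mulrA bt mulrCA.
  exists n, a, t; split=> //; split=> // i.
  by rewrite /J /mul_preim -bt; apply: ideal_mul_mem.
move: m; apply: (ideal_mul_le M_ideal) => p r Pp Jr.
have /(ideal_mulA _ _ P_ideal) : ideal_mul P (ideal_mul Q M) (p * (c * r)).
  exact: ideal_mul_mem.
move/(ideal_mul_le2 (is_ideal_princ c) (fun x => proj1 (PQ_eq x)) (fun _ h => h)).
by case/(ideal_mul_princ M_ideal) => y My; rewrite mulrCA => /(mulfI c0) ->.
Qed.

Lemma squarefree_cofactor P M J : nonzero_prime P -> subset_eq M (ideal_mul P J) ->
  squarefree_ideal M -> squarefree_ideal J.
Proof.
move=> [[[P_ideal _] _] _] M_eq M_sqf Q Q_prime Q_nz [L [L_ideal J_eq]].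
have [[Q_ideal _] _] := Q_prime.
apply: (M_sqf Q Q_prime Q_nz); exists (ideal_mul P L); split; first exact: is_ideal_mul.
move=> x; split=> [/M_eq|].
  move=> /(ideal_mul_le2 P_ideal (fun _ h => h) (fun y => proj1 (J_eq y))).
  exact: ideal_mulCA P_ideal (is_ideal_mul Q Q_ideal) x.
move=> /(ideal_mulCA (is_ideal_mul Q Q_ideal) P_ideal).
move=> /(ideal_mul_le2 P_ideal (fun _ h => h) (fun y => proj2 (J_eq y))).
exact: (proj2 (M_eq x)).
Qed.

Lemma squarefree_cofactor_not_le P M J : nonzero_prime P -> is_ideal J ->
  subset_eq M (ideal_mul P J) -> squarefree_ideal M -> ~ ideal_le J P.
Proof.
move=> P_nzp J_ideal M_eq M_sqf JP; have [[[P_ideal _] _] _] := P_nzp.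
have [L [L_ideal J_eq]] := prime_ideal_dvd P_nzp J_ideal JP.
apply: (M_sqf P P_nzp.1 P_nzp.2); exists L; split=> // x; split=> [/M_eq|].
  move=> /(ideal_mul_le2 P_ideal (fun _ h => h) (fun y => proj1 (J_eq y))).
  exact: (proj1 (ideal_mulA _ _ P_ideal _)).
move=> /(ideal_mulA _ _ P_ideal).
move=> /(ideal_mul_le2 P_ideal (fun _ h => h) (fun y => proj2 (J_eq y))).
exact: (proj2 (M_eq x)).
Qed.

(* Noetherian induction on M: write M = P J with P maximal; J is strictly larger
   (Nakayama), still square-free, and not contained in P, so [1 = p + j r]
   with [j] in J and [p] in P gives [x = x p + x j r] in P J. *)
Lemma squarefree_radical M x : is_ideal M -> ~ is_zero_ideal M -> squarefree_ideal M ->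
  (forall P, nonzero_prime P -> ideal_le M P -> P x) -> M x.
Proof.
move=> M_ideal; move: M M_ideal x; apply: (noetherian_ind R_noeth).
move=> M M_ideal IH x M_nz M_sqf Px.
have [M1|M_proper] := classic (M 1); first exact: ideal_one.
have [P P_max MP] := exists_maximal_ideal R_noeth (conj M_ideal M_proper).
have P_nzp : nonzero_prime P := conj (maximal_ideal_prime P_max) (ideal_le_nonzero M_nz MP).
have [[P_ideal P_proper] _] := P_max.
have [J [J_ideal M_eq]] := prime_ideal_dvd P_nzp M_ideal MP.
have MJ : ideal_le M J by move=> y /M_eq; apply: ideal_mul_subr.
have M_lt_J : ideal_lt M J.
  apply: (ideal_lt_of_not_le MJ) => JM.
  apply: (nakayama R_noeth (conj P_ideal P_proper) M_ideal M_nz) => y /M_eq.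
  exact: ideal_mul_le2 P_ideal (fun _ h => h) JM y.
have Jx : J x.
  apply: IH => //; [exact: ideal_le_nonzero M_nz MJ | exact: squarefree_cofactor M_eq M_sqf |].
  by move=> Q Q_nzp JQ; apply: Px => // y /MJ /JQ.
have [j Jj Pj] : exists2 j, J j & ~ P j.
  apply: NNPP => no_j; apply: (squarefree_cofactor_not_le P_nzp J_ideal M_eq M_sqf) => y Jy.
  by apply: NNPP => Py; apply: no_j; exists y.
have [p [r [Pp e]]] := maximal_ideal_adj_one P_max Pj.
apply/M_eq; rewrite -[x]mulr1 e mulrDr; apply: (idealD (is_ideal_mul J P_ideal)).
  by rewrite mulrC; apply: ideal_mul_mem.
exact: ideal_mul_mem (Px _ P_nzp MP) (idealMr r J_ideal Jj).
Qed.

End Dedekind.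

Lemma fermat_squarefree (R : idomainType) (N : R -> Prop) k :
  noetherian_ring R -> is_ideal N -> ~ is_zero_ideal N -> (1 < k)%N ->
  (forall a, N (a ^+ k - a)) -> squarefree_ideal N.
Proof.
move=> R_noeth N_ideal N_nz k_gt1 N_fermat P P_prime P_nz [J [J_ideal N_eq]].
have [[P_ideal P_proper] _] := P_prime.
pose M := ideal_mul P J; have M_ideal : is_ideal M := is_ideal_mul J P_ideal.
have N_le : ideal_le N (ideal_mul P M) by move=> y /N_eq /(ideal_mulA _ _ P_ideal).
have NM : ideal_le N M by move=> y /N_le; apply: ideal_mul_subr.
have MN : ideal_le M N.
  move=> a Ma; have Na2 : N (a * a).
    apply/N_eq/(ideal_mulA _ _ P_ideal).
    exact: ideal_mul_mem (ideal_mul_subl P_ideal Ma) Ma.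
  have Nak : N (a ^+ k) by rewrite -(subnK k_gt1) exprD expr2; apply: idealMl.
  by have := idealB N_ideal Nak (N_fermat a); rewrite opprB addrC subrK.
apply: (nakayama R_noeth (conj P_ideal P_proper) M_ideal (ideal_le_nonzero N_nz NM)).
by move=> y /MN /N_le.
Qed.

Theorem theorem3p1 (R : idomainType) (hR : dedekind_domain R)
  (N : R -> Prop) (hN : is_composite_ideal N) :
  carmichael_ideal N <->
  [/\ squarefree_ideal N,
      ideal_norm_finite N &
      forall P : R -> Prop, is_prime_ideal P -> ideal_dvd P N ->
        forall kN kP : nat, ideal_norm_eq N kN -> ideal_norm_eq P kP ->
          (kP - 1 %| kN - 1)%N].
Proof.
have [[N_ideal N_proper] [N_nz N_not_prime]] := hN.
have [R_noeth R_ic R_dim1] := hR.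
have divisor_field P : is_prime_ideal P -> ideal_le N P -> quotient_is_field P.
  move=> P_prime NP; apply/maximal_quotient_is_field/R_dim1 => //.
  exact: ideal_le_nonzero N_nz NP.
split=> [[k [Nk N_not_field N_fermat]]|[N_sqf [k Nk] korselt]];
  have k_gt1 := ideal_norm_gt1 (conj N_ideal N_proper) Nk.
- split; [exact: fermat_squarefree R_noeth N_ideal N_nz k_gt1 N_fermat | by exists k |].
  move=> P P_prime PN kN kP NkN PkP; rewrite -(ideal_norm_uniq N_ideal Nk NkN) !subn1.
  have NP := ideal_dvd_le P_prime.1.1 PN.
  apply/(pow_id_mod_ideal_iff P_prime.1.1 (divisor_field P P_prime NP) PkP (ltnW k_gt1)).
  by move=> a; apply/NP/N_fermat.
- exists k; split=> // [N_field|a]; first exact/N_not_prime/quotient_is_field_prime.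
  apply: (squarefree_radical R_noeth R_ic R_dim1 N_ideal N_nz N_sqf) => P [P_prime P_nz] NP.
  have [kP PkP] := ideal_norm_finite_le P_prime.1.1 NP (ex_intro _ k Nk).
  apply: (pow_id_mod_ideal_iff P_prime.1.1 (divisor_field P P_prime NP) PkP (ltnW k_gt1)).2.
  have PN := prime_ideal_dvd R_noeth R_ic R_dim1 (conj P_prime P_nz) N_ideal NP.
  by rewrite -!subn1; apply: (korselt P P_prime PN k kP Nk PkP).
Qed.
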